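(* Assume the standing assumptions (A1) and (A2) below. Let $t\in(1,2)$, $\delta\ge0$, $\varrho>0$, $x^+\in D$ with $\|x^+\|_{k_t}\le\varrho$, and $g^{\mathrm{obs}}\in\mathbb{Y}$ with $\|g^{\mathrm{obs}}-F(x^+)\|_{\mathbb{Y}}\le\delta$. Then there are constants $C_t,C_a,C_r$ depending only on $t$ and $L$ such that for all $\alpha>0$ and every $\hat{x}_\alpha\in\operatorname{argmin}_{x\in D}\left[\frac12\|g^{\mathrm{obs}}-F(x)\|_{\mathbb{Y}}^2+\alpha\|x\|_{\overline{r},1}\right]$: \[\tfrac12\|g^{\mathrm{obs}}-F(\hat{x}_\alpha)\|_{\mathbb{Y}}^2+\alpha\|\hat{x}_\alpha\|_{\overline{r},1}\le\delta^2+C_t\varrho^t\alpha^{2-t},\] \[\|T_\alpha(x^+)-\hat{x}_\alpha\|_{\overline{a},2}^2\le8L^2\delta^2+C_a\varrho^t\alpha^{2-t},\qquad \|T_\alpha(x^+)-\hat{x}_\alpha\|_{\overline{r},1}\le\delta^2\alpha^{-1}+C_r\varrho^t\alpha^{1-t}.\]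
   Context: $\Lambda$ is a countable index set. For a sequence $\omega$ of positive reals and $p\in(0,\infty)$, $\|x\|_{\omega,p}=\left(\sum_{j\in\Lambda}\omega_j^p|x_j|^p\right)^{1/p}$ (possibly $+\infty$) and $\ell^p_\omega=\{x\in\mathbb{R}^\Lambda:\|x\|_{\omega,p}<\infty\}$. For $t\in(0,2)$, $k_t=\{x:\|x\|_{k_t}<\infty\}$ with $\|x\|_{k_t}=\sup_{\alpha>0}\alpha\left(\sum_{j}\overline{a}_j^{-2}\overline{r}_j^2\mathbf{1}_{\{\overline{a}_j^{-2}\overline{r}_j\alpha<|x_j|\}}\right)^{1/t}$. For $\alpha>0$, $T_\alpha(x)_j=x_j$ if $\overline{a}_j^{-2}\overline{r}_j\alpha<|x_j|$ and $0$ otherwise. (A1): $\overline{a},\overline{r}$ are sequences of positive reals indexed by $\Lambda$ such that for every $\varepsilon>0$ all but finitely many $j$ satisfy $\overline{a}_j\overline{r}_j^{-1}\le\varepsilon$; $\mathbb{Y}$ is a Banach space; $D\subseteq\ell^2_{\overline{a}}$ is closed with $D\cap\ell^1_{\overline{r}}\ne\emptyset$; $F:D\to\mathbb{Y}$ and there is $L>0$ with $L^{-1}\|x^{(1)}-x^{(2)}\|_{\overline{a},2}\le\|F(x^{(1)})-F(x^{(2)})\|_{\mathbb{Y}}\le L\|x^{(1)}-x^{(2)}\|_{\overline{a},2}$ for all $x^{(1)},x^{(2)}\in D$. (A2): if $x\in D$ and $z\in\ell^2_{\overline{a}}$ with $|z_j|\le|x_j|$ for all $j$, then $z\in D$. 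*)

From HB Require Import structures.
From mathcomp Require Import all_boot all_order all_algebra.
From mathcomp Require Import all_classical all_reals all_analysis.
Set Implicit Arguments. Unset Strict Implicit. Unset Printing Implicit Defensive.
Import Order.TTheory GRing.Theory Num.Theory.
Import numFieldNormedType.Exports.
Local Open Scope classical_set_scope.
Local Open Scope ring_scope.

Section Defs.
Context {R : realType} {I : countType}.

Definition wnorm (w : I -> R) (p : R) (x : I -> R) : \bar R :=
  ((\esum_(j in [set: I]) ((w j * `|x j|) `^ p)%:E) `^ p^-1)%E.

Definition in_lp (w : I -> R) (p : R) (x : I -> R) : Prop :=
  (wnorm w p x < +oo)%E.

Definition knorm (a r : I -> R) (t : R) (x : I -> R) : \bar R :=
  ereal_sup [set ((al%:E * ((\esum_(j in [set j | ((a j) ^-2 * r j * al < `|x j|)%R])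
                          ((a j) ^-2 * (r j) ^+ 2)%R%:E) `^ t^-1)))%E
            | al in [set al : R | (0 < al)%R]].

Definition Thr (a r : I -> R) (al : R) (x : I -> R) : I -> R :=
  fun j => if (a j) ^-2 * r j * al < `|x j| then x j else 0.

Definition closed_l2 (a : I -> R) (D : set (I -> R)) : Prop :=
  forall (u : nat -> I -> R) (x : I -> R),
    (forall n, D (u n)) -> in_lp a 2 x ->
    (forall e : R, 0 < e -> exists N : nat, forall n, (N <= n)%N ->
        (wnorm a 2 (u n \- x)%R <= e%:E)%E) ->
    D x.

Definition assumption_A1 {Y : completeNormedModType R}
    (a r : I -> R) (D : set (I -> R)) (F : (I -> R) -> Y) (L : R) : Prop :=
  [/\ (forall j, 0 < a j) /\ (forall j, 0 < r j),
      (forall eps : R, 0 < eps -> finite_set [set j | eps < a j / r j]),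
      D `<=` in_lp a 2 /\ closed_l2 a D,
      (exists x, D x /\ in_lp r 1 x) &
      0 < L /\
      (forall x1 x2, D x1 -> D x2 ->
        ((L^-1)%:E * wnorm a 2 (x1 \- x2)%R <= (`|F x1 - F x2|)%:E)%E /\
        ((`|F x1 - F x2|)%:E <= L%:E * wnorm a 2 (x1 \- x2)%R)%E)].

Definition assumption_A2 (a : I -> R) (D : set (I -> R)) : Prop :=
  forall x z : I -> R, D x -> in_lp a 2 z -> (forall j, `|z j| <= `|x j|) -> D z.

Definition tik {Y : completeNormedModType R} (r : I -> R) (F : (I -> R) -> Y)
    (gobs : Y) (al : R) (x : I -> R) : \bar R :=
  ((2^-1 * `|gobs - F x| ^+ 2)%:E + al%:E * wnorm r 1 x)%E.

Definition is_argmin {Y : completeNormedModType R} (D : set (I -> R)) (r : I -> R)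
    (F : (I -> R) -> Y) (gobs : Y) (al : R) (xh : I -> R) : Prop :=
  D xh /\ forall x, D x -> (tik r F gobs al xh <= tik r F gobs al x)%E.

End Defs.

From HB Require Import structures.
From mathcomp Require Import all_boot all_order all_algebra.
From mathcomp Require Import all_classical all_reals all_analysis.
From mathcomp Require Import finmap ring lra.
Set Implicit Arguments. Unset Strict Implicit. Unset Printing Implicit Defensive.
Import Order.TTheory GRing.Theory Num.Theory.
Import numFieldNormedType.Exports.
Local Open Scope classical_set_scope.
Local Open Scope ring_scope.

(* Write u_j = |x_j| a_j^2 / r_j and w_j = a_j^-2 r_j^2.  The bound ||x||_{k_t} <= rho
   says exactly that w{u > b} <= (rho / b)^t for all b > 0, i.e. u is weak-l^t for the
   weights w.  Summing over the dyadic shells {b < u <= 2b}, a geometric series bounds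
   the part of x removed by hard thresholding, ||x - T_alpha x||_{a,2}^2 = sum_{u <= alpha}
   w u^2, by C rho^t alpha^(2-t) (this needs t < 2), and the part it keeps,
   ||T_alpha x||_{r,1} = sum_{u > alpha} w u, by C rho^t alpha^(1-t) (this needs t > 1).
   By (A2), T_alpha x^+ lies in D, and its data misfit is at most
   delta + L ||x^+ - T_alpha x^+||_{a,2}.  Comparing the Tikhonov functional at the
   minimiser with its value at this competitor gives the first bound; the lower
   Lipschitz bound and the triangle inequality turn it into the two error bounds. *)

Lemma exists_switch (P : pred nat) (M : nat) :
  ~~ P 0%N -> P M -> exists2 k, (k < M)%N & ~~ P k && P k.+1.
Proof.
move=> P0 PM; case: (ex_minnP (ex_intro P M PM)) => -[|k] Pk minP.
  by rewrite Pk in P0.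
exists k; first exact: minP.
by rewrite Pk andbT; apply/negP => /minP; rewrite ltnn.
Qed.

Section DyadicSums.
Context {R : realType}.

Lemma ler_sum_cover {I : eqType} (s : seq I) (P : pred I) (Q : nat -> pred I)
    (M : nat) (f : I -> R) :
  (forall j, 0 <= f j) ->
  (forall j, j \in s -> P j -> f j = 0 \/ exists2 k, (k < M)%N & Q k j) ->
  \sum_(j <- s | P j) f j <= \sum_(k < M) \sum_(j <- s | Q k j) f j.
Proof.
move=> f0 cover.
under [X in _ <= X]eq_bigr do rewrite big_mkcond.
rewrite exchange_big /= big_mkcond big_seq [X in _ <= X]big_seq.
apply: ler_sum => j js.
have sum_ge0 : 0 <= \sum_(k < M) (if Q k j then f j else 0).
  by apply: sumr_ge0 => k _; case: ifP.
case: ifP => [Pj|_ //]; case: (cover j js Pj) => [fj0|[k kM Qkj]].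
  by rewrite {1}fj0.
by rewrite (bigD1 (Ordinal kM)) //= Qkj lerDl; apply: sumr_ge0 => i _; case: ifP.
Qed.

Lemma shell_sum_le {I : Type} (s : seq I) (u w : I -> R) (K t b : R) (p : nat) :
  (forall j, 0 <= w j) -> 0 < b ->
  \sum_(j <- s | b < u j) w j <= K / b `^ t ->
  \sum_(j <- s | b < u j <= 2 * b) w j * u j ^+ p <= 2 ^+ p * K * b `^ (p%:R - t).
Proof.
move=> w0 b0 level.
have b2_ge0 : 0 <= 2 * b by rewrite mulr_ge0 // ltW.
apply: (@le_trans _ _ (\sum_(j <- s | b < u j) w j * (2 * b) ^+ p)).
  rewrite big_mkcondr /=; apply: ler_sum => j bu; case: ifP => ub.
    by rewrite ler_wpM2l // lerXn2r // nnegrE ltW // (lt_trans b0).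
  by rewrite mulr_ge0 // exprn_ge0.
rewrite -big_distrl /=; apply: le_trans (ler_wpM2r (exprn_ge0 _ b2_ge0) level) _.
rewrite powRB ?(gt_eqF b0) ?implybT // powR_mulrn ?(ltW b0) // exprMn.
lra.
Qed.

Lemma dyadic_sum_le {I : eqType} (s : seq I) (P : pred I) (u w : I -> R)
    (K t g c : R) (p M : nat) :
  0 <= K -> 0 < g -> 0 < c -> c `^ (p%:R - t) < 1 ->
  (forall j, 0 <= u j) -> (forall j, 0 <= w j) ->
  (forall b, 0 < b -> \sum_(j <- s | b < u j) w j <= K / b `^ t) ->
  (forall j, j \in s -> P j -> w j * u j ^+ p = 0 \/
     exists2 k, (k < M)%N & g * c ^+ k < u j <= 2 * (g * c ^+ k)) ->
  \sum_(j <- s | P j) w j * u j ^+ p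
    <= 2 ^+ p * K * g `^ (p%:R - t) / (1 - c `^ (p%:R - t)).
Proof.
move=> K0 g0 c0 q1 u0 w0 level cover.
set e := p%:R - t; set q := c `^ e.
have gck0 k : 0 < g * c ^+ k by rewrite mulr_gt0 // exprn_gt0.
have f0 j : 0 <= w j * u j ^+ p by rewrite mulr_ge0 // exprn_ge0.
apply: le_trans (ler_sum_cover f0 cover) _.
have shell k : \sum_(j <- s | g * c ^+ k < u j <= 2 * (g * c ^+ k)) w j * u j ^+ p
    <= 2 ^+ p * K * g `^ e * q ^+ k.
  rewrite -mulrA; have -> : g `^ e * q ^+ k = (g * c ^+ k) `^ e.
    rewrite powRM ?exprn_ge0 ?(ltW g0) ?(ltW c0) //; congr (_ * _).
    by rewrite -(powR_mulrn k (ltW c0)) -powRrM mulrC powRrM powR_mulrn ?powR_ge0.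
  by rewrite shell_sum_le // level.
apply: le_trans (ler_sum _ (fun (k : 'I_M) _ => shell k)) _.
have := @geometric_le_lim _ M (2 ^+ p * K * g `^ e) q.
rewrite /series /= big_mkord; apply.
- by rewrite !mulr_ge0 ?exprn_ge0 ?powR_ge0.
- exact: powR_gt0.
- by rewrite ger0_norm ?powR_ge0.
Qed.

Lemma powR_lt1 (c e : R) : 0 < c -> e * ln c < 0 -> c `^ e < 1.
Proof. by move=> c0; rewrite /powR gt_eqF // expR_lt1. Qed.

Definition residual_const (t : R) := 4 * 2^-1 `^ (2 - t) / (1 - 2^-1 `^ (2 - t)).
Definition thresh_const (t : R) := 2 / (1 - 2 `^ (1 - t)).

Section WeakSums.
Variables (I : eqType) (s : seq I) (u w : I -> R) (K t al : R).
Hypotheses (K_ge0 : 0 <= K) (al_gt0 : 0 < al).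
Hypotheses (u_ge0 : forall j, 0 <= u j) (w_ge0 : forall j, 0 <= w j).
Hypothesis level_le : forall b, 0 < b -> \sum_(j <- s | b < u j) w j <= K / b `^ t.

Lemma sum_sqr_below_le : t < 2 ->
  \sum_(j <- s | u j <= al) w j * u j ^+ 2 <= residual_const t * K * al `^ (2 - t).
Proof.
move=> t_lt2.
have h0 : (0 : R) < 2^-1 by rewrite invr_gt0.
have g0 : 0 < al / 2 by rewrite divr_gt0.
have q1 : 2^-1 `^ (2%:R - t) < 1.
  by rewrite powR_lt1 // pmulr_rlt0 ?subr_gt0 // ln_lt0 // h0 invf_lt1 // ltr1n.
set M := (\max_(j <- s) Num.Def.archi_bound (al / u j))%N.
have cover j : j \in s -> u j <= al -> w j * u j ^+ 2 = 0 \/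
    exists2 k, (k < M)%N & al / 2 * 2^-1 ^+ k < u j <= 2 * (al / 2 * 2^-1 ^+ k).
  move=> js uj_le; have [->|uj0] := eqVneq (u j) 0.
    by left; rewrite expr0n mulr0.
  right; have uj_gt0 : 0 < u j by rewrite lt0r uj0 u_ge0.
  pose P k := al * 2^-1 ^+ k < u j.
  have P0 : ~~ P 0%N by rewrite /P expr0 mulr1 -leNgt.
  have PM : P M.
    have := upper_nthrootP
      (leq_bigmax_seq (F := fun i => Num.Def.archi_bound (al / u i)) _ js isT).
    by rewrite /P exprVn ltr_pdivrMr ?exprn_gt0 // ltr_pdivrMr // mulrC.
  have [k kM /andP[]] := exists_switch P0 PM; rewrite /P -leNgt exprS => le_k lt_k1.
  exists k => //; rewrite -mulrA lt_k1 /=.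
  by have -> : 2 * (al * (2^-1 * 2^-1 ^+ k)) = al * 2^-1 ^+ k by field.
apply: le_trans (dyadic_sum_le K_ge0 g0 h0 q1 u_ge0 w_ge0 level_le cover) _.
by rewrite /residual_const powRM ?(ltW al_gt0) ?(ltW h0) //; lra.
Qed.

Lemma sum_above_le : 1 < t ->
  \sum_(j <- s | al < u j) w j * u j <= thresh_const t * K * al `^ (1 - t).
Proof.
move=> t_gt1.
have q1 : 2 `^ (1%:R - t) < 1.
  by rewrite powR_lt1 // pmulr_llt0 ?ln_gt0 ?ltr1n // subr_lt0.
set M := (\max_(j <- s) Num.Def.archi_bound (u j / al))%N.
have cover j : j \in s -> al < u j -> w j * u j ^+ 1 = 0 \/
    exists2 k, (k < M)%N & al * 2 ^+ k < u j <= 2 * (al * 2 ^+ k).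
  move=> js al_lt; right.
  pose P k := u j <= al * 2 ^+ k.
  have P0 : ~~ P 0%N by rewrite /P expr0 mulr1 -ltNge.
  have PM : P M.
    have := upper_nthrootP
      (leq_bigmax_seq (F := fun i => Num.Def.archi_bound (u i / al)) _ js isT).
    by rewrite ltr_pdivrMr // mulrC => /ltW.
  have [k kM /andP[]] := exists_switch P0 PM; rewrite /P -ltNge exprS => lt_k le_k1.
  by exists k => //; rewrite lt_k mulrCA.
apply: le_trans (dyadic_sum_le K_ge0 al_gt0 _ q1 u_ge0 w_ge0 level_le cover) _ => //.
by rewrite mulr1n /thresh_const; lra.
Qed.

End WeakSums.
End DyadicSums.

Section ExtendedPowers.
Context {R : realType}.

Lemma poweR2_le (W : \bar R) (c : R) : (0 <= W)%E -> (W <= c%:E)%E ->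
  (W `^ 2 <= (c ^+ 2)%:E)%E.
Proof.
move=> W0 Wc; have c0 : 0 <= c by rewrite -lee_fin (le_trans W0).
rewrite -powR_mulrn // -poweR_EFin.
by apply: gt0_ler_poweR; rewrite // in_itv /= ?lee_fin ?W0 ?c0 leey.
Qed.

Lemma poweR2_le_fin (W : \bar R) (c : R) : (0 <= W)%E -> (W `^ 2 <= c%:E)%E ->
  exists w, [/\ W = w%:E, 0 <= w & w ^+ 2 <= c].
Proof.
case: W => [w| |] // w0; last by rewrite poweRyr ?pnatr_eq0 // leye_eq.
rewrite lee_fin in w0; rewrite poweR_EFin lee_fin powR_mulrn // => w2.
by exists w.
Qed.

Lemma mule_poweRV_le (m : \bar R) (b rho t : R) : 0 < b -> 0 < t -> (0 <= m)%E ->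
  (b%:E * m `^ t^-1 <= rho%:E)%E -> (m <= (rho `^ t / b `^ t)%:E)%E.
Proof.
move=> b0 t0; case: m => [m| |] // m0; last first.
  by rewrite poweRyr ?invr_eq0 ?gt_eqF // muleC gt0_mulye ?lte_fin // leye_eq.
rewrite lee_fin in m0; rewrite poweR_EFin -EFinM !lee_fin => le_rho.
rewrite ler_pdivlMr ?powR_gt0 // mulrC.
have -> : b `^ t * m = (b * m `^ t^-1) `^ t.
  by rewrite powRM ?powR_ge0 ?(ltW b0) // -powRrM mulVf ?gt_eqF // powRr1.
have bm0 : 0 <= b * m `^ t^-1 by rewrite mulr_ge0 ?powR_ge0 // ltW.
by apply: ge0_ler_powR; rewrite ?nnegrE ?(ltW t0) ?(le_trans bm0).
Qed.

End ExtendedPowers.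

Section WeightedNorms.
Context {R : realType} {I : countType}.
Implicit Types (w a r x y z : I -> R) (p : R).

Lemma wnorm_ge0 w p x : (0 <= wnorm w p x)%E.
Proof. exact: poweR_ge0. Qed.

Lemma wnorm1E r z : (forall j, 0 <= r j) ->
  wnorm r 1 z = \esum_(j in [set: I]) (r j * `|z j|)%:E.
Proof.
move=> r0; rewrite /wnorm invr1 poweRe1; last first.
  by apply: esum_ge0 => j _; rewrite lee_fin powR_ge0.
by apply: eq_esum => j _; rewrite powRr1 // mulr_ge0.
Qed.

Lemma wnorm2E_sqr a z : (forall j, 0 <= a j) ->
  ((wnorm a 2 z) `^ 2 = \esum_(j in [set: I]) ((a j * `|z j|) ^+ 2)%:E)%E.
Proof.
move=> a0; rewrite /wnorm -poweRrM mulVf ?pnatr_eq0 // poweRe1; last first.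
  by apply: esum_ge0 => j _; rewrite lee_fin powR_ge0.
by apply: eq_esum => j _; rewrite powR_mulrn // mulr_ge0.
Qed.

Lemma le_wnorm w p x z : (forall j, 0 <= w j) -> 0 <= p ->
  (forall j, `|z j| <= `|x j|) -> (wnorm w p z <= wnorm w p x)%E.
Proof.
move=> w0 p0 zx.
have terms_ge0 v : (0 <= \esum_(j in [set: I]) ((w j * `|v j|) `^ p)%:E)%E.
  by apply: esum_ge0 => j _; rewrite lee_fin powR_ge0.
apply: gt0_ler_poweR; rewrite ?invr_ge0 ?in_itv /= ?leey ?andbT ?terms_ge0 //.
apply: le_esum => j _; rewrite lee_fin ge0_ler_powR ?nnegrE ?mulr_ge0 //.
exact: ler_wpM2l.
Qed.

Lemma wnorm1_sub_le r x y : (forall j, 0 <= r j) ->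
  (wnorm r 1 (x \- y)%R <= wnorm r 1 x + wnorm r 1 y)%E.
Proof.
move=> r0; rewrite !wnorm1E // -esumD => [|j _|j _]; rewrite ?lee_fin ?mulr_ge0 //.
by apply: le_esum => j _; rewrite -EFinD lee_fin -mulrDr ler_wpM2l // ler_normB.
Qed.

Lemma esum_le_fsum (f : I -> R) (c : R) :
  (forall A : {fset I}, \sum_(j <- A) f j <= c) ->
  (\esum_(j in [set: I]) (f j)%:E <= c%:E)%E.
Proof.
move=> fsum_le; apply: ge_ereal_sup => _ [X [finX _] <-].
by rewrite fsbig_finite //= sumEFin lee_fin.
Qed.

Lemma fsum_le_esum (A : {fset I}) (P : pred I) (f : I -> R) : (forall j, 0 <= f j) ->
  ((\sum_(j <- A | P j) f j)%:E <= \esum_(j in [set j | P j]) (f j)%:E)%E.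
Proof.
move=> f0; rewrite esum_mkcond; apply: esum_ge; exists [set` A] => //.
rewrite fsbig_finite //= set_fsetK -sumEFin big_mkcond /=.
by apply: lee_sum => j _; rewrite mem_setE; case: ifP.
Qed.

End WeightedNorms.

Section KNorm.
Context {R : realType} {I : countType}.
Variables (a r x : I -> R) (t rho : R).
Hypotheses (a_gt0 : forall j, 0 < a j) (r_gt0 : forall j, 0 < r j).
Hypothesis knorm_le : (knorm a r t x <= rho%:E)%E.

(* [knorm a r t x] is the weak-l^t quasi-norm of [kratio] for the weights [kweight]. *)
Definition kratio j := `|x j| * a j ^+ 2 / r j.
Definition kweight j := a j ^-2 * r j ^+ 2.

Lemma kratio_ge0 j : 0 <= kratio j.
Proof. by rewrite /kratio !mulr_ge0 ?invr_ge0 ?exprn_ge0 // ltW. Qed.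

Lemma kweight_ge0 j : 0 <= kweight j.
Proof. by rewrite /kweight !mulr_ge0 ?invr_ge0 ?exprn_ge0 // ltW. Qed.

Lemma kweight_kratio j : kweight j * kratio j = r j * `|x j|.
Proof. by rewrite /kweight /kratio; field; rewrite !gt_eqF. Qed.

Lemma kweight_kratio_sqr j : kweight j * kratio j ^+ 2 = (a j * `|x j|) ^+ 2.
Proof. by rewrite /kweight /kratio; field; rewrite !gt_eqF. Qed.

Lemma lt_kratio b j : (a j ^-2 * r j * b < `|x j|) = (b < kratio j).
Proof.
rewrite /kratio -mulrA mulrC ltr_pdivrMr ?exprn_gt0 //.
by rewrite ltr_pdivlMr // [b * _]mulrC.
Qed.

Lemma Thr_kratio al j : Thr a r al x j = if al < kratio j then x j else 0.
Proof. by rewrite /Thr lt_kratio. Qed.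

Lemma knorm_level_le (A : {fset I}) b : 0 < t -> 0 < b ->
  \sum_(j <- A | b < kratio j) kweight j <= rho `^ t / b `^ t.
Proof.
move=> t0 b0; set S := [set j | b < kratio j].
have : (b%:E * (\esum_(j in S) (kweight j)%:E) `^ t^-1 <= rho%:E)%E.
  apply: le_trans knorm_le; apply: ereal_sup_ubound; exists b => //.
  by congr (_ * (esum _ _) `^ _)%E; apply/seteqP; split => j /=; rewrite lt_kratio.
have esum0 : (0 <= \esum_(j in S) (kweight j)%:E)%E.
  by apply: esum_ge0 => j _; rewrite lee_fin kweight_ge0.
move/(mule_poweRV_le b0 t0 esum0) => level; rewrite -lee_fin.
by apply: le_trans _ level; apply: fsum_le_esum; exact: kweight_ge0.
Qed.

Lemma residual_wnorm_le al : 0 < al -> 0 < t -> t < 2 ->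
  ((wnorm a 2 (x \- Thr a r al x)%R) `^ 2
     <= (residual_const t * rho `^ t * al `^ (2 - t))%:E)%E.
Proof.
move=> al0 t0 t_lt2; rewrite wnorm2E_sqr => [|j]; last exact: ltW.
apply: esum_le_fsum => A.
rewrite (eq_bigr (fun j => if kratio j <= al then kweight j * kratio j ^+ 2 else 0)).
  rewrite -big_mkcond /=; apply: sum_sqr_below_le (powR_ge0 _ _) al0 kratio_ge0
    kweight_ge0 (fun b => knorm_level_le A t0) t_lt2.
move=> j _; rewrite /= Thr_kratio leNgt; case: ifP => _ /=.
  by rewrite subrr normr0 mulr0 expr0n.
by rewrite subr0 kweight_kratio_sqr.
Qed.

Lemma Thr_wnorm1_le al : 0 < al -> 1 < t ->
  (wnorm r 1 (Thr a r al x) <= (thresh_const t * rho `^ t * al `^ (1 - t))%:E)%E.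
Proof.
move=> al0 t_gt1; have t0 : 0 < t by apply: lt_trans t_gt1.
rewrite wnorm1E => [|j]; last exact: ltW.
apply: esum_le_fsum => A.
rewrite (eq_bigr (fun j => if al < kratio j then kweight j * kratio j else 0)).
  rewrite -big_mkcond /=; apply: sum_above_le (powR_ge0 _ _) al0 kratio_ge0
    kweight_ge0 (fun b => knorm_level_le A t0) t_gt1.
move=> j _; rewrite Thr_kratio; case: ifP => _ /=.
  by rewrite kweight_kratio.
by rewrite normr0 mulr0.
Qed.

End KNorm.

Section Thresholding.
Context {R : realType} {I : countType}.
Variables (a r : I -> R) (al : R).

Lemma normr_Thr_le x j : `|Thr a r al x j| <= `|x j|.
Proof. by rewrite /Thr; case: ifP; rewrite ?normr0. Qed.

Lemma Thr_in_D (D : set (I -> R)) x :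
  (forall j, 0 <= a j) -> D `<=` in_lp a 2 -> assumption_A2 a D -> D x ->
  D (Thr a r al x).
Proof.
move=> a0 D_lp A2 Dx; apply: (A2 _ _ Dx _ (normr_Thr_le x)).
by apply: le_lt_trans (D_lp _ Dx); apply: le_wnorm => // j; exact: normr_Thr_le.
Qed.

End Thresholding.

Section Comparison.
Context {R : realType} {I : countType} {Y : completeNormedModType R}.
Variables (a r : I -> R) (D : set (I -> R)) (F : (I -> R) -> Y) (L : R) (gobs : Y).
Hypothesis L_gt0 : 0 < L.
Hypothesis F_bilip : forall x1 x2, D x1 -> D x2 ->
  ((L^-1)%:E * wnorm a 2 (x1 \- x2)%R <= (`|F x1 - F x2|)%:E)%E /\
  ((`|F x1 - F x2|)%:E <= L%:E * wnorm a 2 (x1 \- x2)%R)%E.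

Lemma tik_le x al c1 c2 : 0 < al -> `|gobs - F x| ^+ 2 <= 2 * c1 ->
  (wnorm r 1 x <= c2%:E)%E -> (tik r F gobs al x <= (c1 + al * c2)%:E)%E.
Proof.
move=> al0 misfit_le norm_le; rewrite /tik EFinD [(al * c2)%:E]EFinM; apply: leeD.
  by rewrite lee_fin; lra.
by apply: lee_wpmul2l => //; rewrite lee_fin ltW.
Qed.

Lemma tik_misfit_le x al c : 0 < al -> (tik r F gobs al x <= c%:E)%E ->
  `|gobs - F x| ^+ 2 <= 2 * c.
Proof.
move=> al0 tik_le_c; have : 2^-1 * `|gobs - F x| ^+ 2 <= c; last lra.
rewrite -lee_fin; apply: le_trans tik_le_c; rewrite /tik leeDl // mule_ge0 //.
  by rewrite lee_fin ltW.
exact: wnorm_ge0.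
Qed.

Lemma tik_wnorm1_le x al c : 0 < al -> (tik r F gobs al x <= c%:E)%E ->
  (wnorm r 1 x <= (c / al)%:E)%E.
Proof.
move=> al0 tik_le_c; rewrite mulrC EFinM lee_pdivlMl //.
by apply: le_trans tik_le_c; rewrite /tik addeC leeDl // lee_fin.
Qed.

Lemma misfit_sqr_le x y delta e : D x -> D y -> `|gobs - F x| <= delta ->
  ((wnorm a 2 (x \- y)%R) `^ 2 <= e%:E)%E ->
  `|gobs - F y| ^+ 2 <= 2 * (delta ^+ 2 + L ^+ 2 * e).
Proof.
move=> Dx Dy misfit_x /(poweR2_le_fin (wnorm_ge0 _ _ _)) [w [Ww w0 w2]].
have [_] := F_bilip Dx Dy; rewrite Ww -EFinM lee_fin => dist_le.
have misfit_y : `|gobs - F y| <= delta + L * w.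
  by apply: le_trans (ler_distD (F x) _ _) _; apply: lerD.
have delta0 : 0 <= delta by apply: le_trans misfit_x.
have : `|gobs - F y| ^+ 2 <= (delta + L * w) ^+ 2.
  by apply: lerXn2r; rewrite ?nnegrE ?addr_ge0 ?mulr_ge0 // ltW.
have : L ^+ 2 * w ^+ 2 <= L ^+ 2 * e by rewrite ler_wpM2l // sqr_ge0.
have := sqr_ge0 (delta - L * w); nra.
Qed.

Lemma wnorm2_sqr_le_misfit x y : D x -> D y ->
  ((wnorm a 2 (x \- y)%R) `^ 2
     <= (2 * L ^+ 2 * (`|gobs - F x| ^+ 2 + `|gobs - F y| ^+ 2))%:E)%E.
Proof.
move=> Dx Dy; have [lower _] := F_bilip Dx Dy; rewrite lee_pdivrMl // -EFinM in lower.
apply: le_trans (poweR2_le (wnorm_ge0 _ _ _) lower) _; rewrite lee_fin.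
set p := `|gobs - F x|; set q := `|gobs - F y|.
have [p0 q0] : 0 <= p /\ 0 <= q by split; rewrite /p /q.
have dist_le : `|F x - F y| <= p + q by rewrite /p (distrC gobs (F x)) ler_distD.
have dist2_le : `|F x - F y| ^+ 2 <= (p + q) ^+ 2.
  by apply: lerXn2r; rewrite ?nnegrE ?addr_ge0.
have sum2_le : (p + q) ^+ 2 <= 2 * (p ^+ 2 + q ^+ 2) by have := sqr_ge0 (p - q); nra.
rewrite exprMn -mulrA [X in _ <= X]mulrCA; apply: ler_wpM2l; first exact: sqr_ge0.
exact: le_trans dist2_le sum2_le.
Qed.

Lemma argmin_competitor_le z al xh c1 c2 :
  (forall j, 0 <= r j) -> 0 < al -> is_argmin D r F gobs al xh -> D z ->
  `|gobs - F z| ^+ 2 <= 2 * c1 -> (wnorm r 1 z <= c2%:E)%E ->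
  [/\ (tik r F gobs al xh <= (c1 + al * c2)%:E)%E,
      ((wnorm a 2 (z \- xh)%R) `^ 2 <= (4 * L ^+ 2 * (2 * c1 + al * c2))%:E)%E &
      (wnorm r 1 (z \- xh)%R <= (2 * c2 + c1 / al)%:E)%E].
Proof.
move=> r0 al0 [Dxh xh_min] Dz misfit_z norm_z.
have tik_xh := le_trans (xh_min _ Dz) (tik_le al0 misfit_z norm_z).
split => //.
- apply: le_trans (wnorm2_sqr_le_misfit Dz Dxh) _; rewrite lee_fin.
  have := tik_misfit_le al0 tik_xh.
  have := sqr_ge0 L; nra.
- apply: le_trans (wnorm1_sub_le _ _ r0) _.
  apply: le_trans (leeD norm_z (tik_wnorm1_le al0 tik_xh)) _.
  by rewrite -EFinD lee_fin mulrDl mulrAC divff ?gt_eqF // mul1r; lra.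
Qed.

End Comparison.

Theorem lemma5p2 (R : realType) (t L : R) :
  1 < t < 2 -> 0 < L ->
  exists Ct Ca Cr : R,
  forall (I : countType) (Y : completeNormedModType R)
         (a r : I -> R) (D : set (I -> R)) (F : (I -> R) -> Y),
  assumption_A1 a r D F L -> assumption_A2 a D ->
  forall (delta rho : R) (xp : I -> R) (gobs : Y),
  0 <= delta -> 0 < rho -> D xp -> (knorm a r t xp <= rho%:E)%E ->
  `|gobs - F xp| <= delta ->
  forall (al : R) (xh : I -> R), 0 < al -> is_argmin D r F gobs al xh ->
  [/\ (tik r F gobs al xh <= (delta ^+ 2 + Ct * rho `^ t * al `^ (2 - t))%:E)%E,
      ((wnorm a 2 (Thr a r al xp \- xh)%R) `^ 2
         <= (8 * L ^+ 2 * delta ^+ 2 + Ca * rho `^ t * al `^ (2 - t))%:E)%E &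
      (wnorm r 1 (Thr a r al xp \- xh)%R
         <= (delta ^+ 2 / al + Cr * rho `^ t * al `^ (1 - t))%:E)%E].
Proof.
move=> /andP[t_gt1 t_lt2] L_gt0.
set A := residual_const t; set B := thresh_const t.
exists (L ^+ 2 * A + B), (4 * L ^+ 2 * (2 * L ^+ 2 * A + B)), (L ^+ 2 * A + 2 * B).
move=> I Y a r D F [[a_gt0 r_gt0] _ [D_lp _] _ [_ F_bilip]] A2 delta rho xp gobs
  _ _ Dxp knorm_le misfit_xp al xh al_gt0 xh_argmin.
have t_gt0 : 0 < t by apply: lt_trans t_gt1.
have al_pow : al `^ (2 - t) = al * al `^ (1 - t).
  by rewrite (_ : 1 - t = 2 - t - 1) ?mulr_powRB1 ?subr_gt0 // ?(ltW al_gt0); ring.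
have DT : D (Thr a r al xp) by apply: Thr_in_D => // j; apply: ltW.
have misfit_T := misfit_sqr_le L_gt0 F_bilip Dxp DT misfit_xp
  (residual_wnorm_le a_gt0 r_gt0 knorm_le al_gt0 t_gt0 t_lt2).
have norm_T := Thr_wnorm1_le a_gt0 r_gt0 knorm_le al_gt0 t_gt1.
have [tik_xh err_a err_r] := argmin_competitor_le L_gt0 F_bilip
  (fun j => ltW (r_gt0 j)) al_gt0 xh_argmin DT misfit_T norm_T.
rewrite -/A -/B in tik_xh err_a err_r.
split.
- by apply: le_trans tik_xh _; rewrite lee_fin al_pow; lra.
- by apply: le_trans err_a _; rewrite lee_fin al_pow; lra.
- apply: le_trans err_r _; rewrite lee_fin al_pow.
  rewrite (_ : L ^+ 2 * (A * _ * (al * _)) = L ^+ 2 * A * rho `^ t * al `^ (1 - t) * al).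
    by rewrite [(delta ^+ 2 + _) / al]mulrDl mulfK ?gt_eqF //; lra.
  by rewrite !mulrA mulrAC.
Qed.
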